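(* Let $\Bbbk$ be a field of characteristic $0$ and let $J$ be a special Jordan dialgebra such that the algebra $\bar J$ has a unit. Then $\bar J$ is a special Jordan algebra.
   Context: An associative dialgebra is a vector space with bilinear $\vdash,\dashv$ satisfying $(x\dashv y)\vdash z=(x\vdash y)\vdash z$, $x\dashv(y\vdash z)=x\dashv(y\dashv z)$, $(x\vdash y)\vdash z=x\vdash(y\vdash z)$, $(x\dashv y)\dashv z=x\dashv(y\dashv z)$, $(x\vdash y)\dashv z=x\vdash(y\dashv z)$; $D^{(+)}$ is $D$ with $a\vdash_+b=\tfrac12(a\vdash b+b\dashv a)$, $a\dashv_+b=\tfrac12(a\dashv b+b\vdash a)$. A special Jordan dialgebra is a subdialgebra $J$ of some $D^{(+)}$. For such $J$ (operations $\vdash_+,\dashv_+$), $[J,J]=\mathrm{span}\{a\vdash_+b-a\dashv_+b: a,b\in J\}$ is an ideal and $\bar J=J/[J,J]$ is an ordinary (Jordan) algebra. A Jordan algebra is special if it embeds into $A^{(+)}$ (product $\tfrac12(ab+ba)$) for an associative algebra $A$. *)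

From HB Require Import structures.
From mathcomp Require Import all_boot all_order all_algebra.
Set Implicit Arguments. Unset Strict Implicit. Unset Printing Implicit Defensive.
Import Order.TTheory GRing.Theory Num.Theory.
Local Open Scope ring_scope.

(* An associative dialgebra over F: a vector space D with two bilinear
   products dl (written |-) and dr (written -|) satisfying the five axioms. *)
Record assoc_dialgebra (F : fieldType) (D : lmodType F)
    (dl dr : D -> D -> D) : Prop := AssocDialgebra {
  dl_linl : forall (c : F) x y z, dl (c *: x + y) z = c *: dl x z + dl y z;
  dl_linr : forall (c : F) x y z, dl x (c *: y + z) = c *: dl x y + dl x z;
  dr_linl : forall (c : F) x y z, dr (c *: x + y) z = c *: dr x z + dr y z;
  dr_linr : forall (c : F) x y z, dr x (c *: y + z) = c *: dr x y + dr x z;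
  dia1 : forall x y z, dl (dr x y) z = dl (dl x y) z;
  dia2 : forall x y z, dr x (dl y z) = dr x (dr y z);
  dia3 : forall x y z, dl (dl x y) z = dl x (dl y z);
  dia4 : forall x y z, dr (dr x y) z = dr x (dr y z);
  dia5 : forall x y z, dr (dl x y) z = dl x (dr y z)
}.

Definition dlp (F : fieldType) (D : lmodType F) (dl dr : D -> D -> D) (a b : D) : D :=
  (2%:R : F)^-1 *: (dl a b + dr b a).
Definition drp (F : fieldType) (D : lmodType F) (dl dr : D -> D -> D) (a b : D) : D :=
  (2%:R : F)^-1 *: (dr a b + dl b a).

Record sub_dialgebra_plus (F : fieldType) (D : lmodType F)
    (dl dr : D -> D -> D) (J : D -> Prop) : Prop := SubDialgebraPlus {
  sub0 : J 0;
  sub_lin : forall (c : F) a b, J a -> J b -> J (c *: a + b);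
  sub_dlp : forall a b, J a -> J b -> J (dlp dl dr a b);
  sub_drp : forall a b, J a -> J b -> J (drp dl dr a b)
}.

Inductive commJ (F : fieldType) (D : lmodType F) (dl dr : D -> D -> D)
    (J : D -> Prop) : D -> Prop :=
  | commJ_gen a b : J a -> J b -> commJ dl dr J (dlp dl dr a b - drp dl dr a b)
  | commJ_0 : commJ dl dr J 0
  | commJ_lin (c : F) x y :
      commJ dl dr J x -> commJ dl dr J y -> commJ dl dr J (c *: x + y).

(* The algebra Jbar = J/[J,J] (product induced by |-_+, which agrees with
   -|_+ modulo [J,J]) has a unit: the class of some e in J. *)
Definition Jbar_has_unit (F : fieldType) (D : lmodType F) (dl dr : D -> D -> D)
    (J : D -> Prop) : Prop :=
  exists2 e, J e & forall a, J a ->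
    commJ dl dr J (dlp dl dr e a - a) /\ commJ dl dr J (dlp dl dr a e - a).

(* Jbar is a special Jordan algebra: there is an associative algebra A and an
   injective algebra homomorphism Jbar -> A^(+).  Such a homomorphism is
   represented by a map phi defined on J, linear on J, whose kernel on J is
   exactly [J,J], and which sends |-_+ to the Jordan product of A^(+). *)
Definition Jbar_special (F : fieldType) (D : lmodType F) (dl dr : D -> D -> D)
    (J : D -> Prop) : Prop :=
  exists (A : algType F) (phi : D -> A),
    [/\ forall (c : F) a b, J a -> J b -> phi (c *: a + b) = c *: phi a + phi b,
        forall a, J a -> (phi a = 0 <-> commJ dl dr J a) &
        forall a b, J a -> J b ->
          phi (dlp dl dr a b) = (2%:R : F)^-1 *: (phi a * phi b + phi b * phi a)].

(* Let a in D act on D (+) D by (x, y) |-> (a |- x, y -| a).  The dialgebra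
   axioms give L_(a |- b) = L_(a -| b) = L_a L_b and R_(a |- b) = R_(a -| b)
   = R_b R_a, so this representation sends a |-_+ b to the Jordan product of
   the actions of a and b and kills [J,J].  It is faithful on J/[J,J]: for a
   right unit e of J/[J,J], a = a |-_+ e mod [J,J], and a |-_+ e is determined
   by the action of a on (e, e).  Hence J/[J,J] embeds into A^(+) for A the
   endomorphism algebra of D (+) D. *)

From HB Require Import structures.
From mathcomp Require Import all_boot all_order all_algebra.
From mathcomp Require Import boolp.
Set Implicit Arguments. Unset Strict Implicit. Unset Printing Implicit Defensive.
Import GRing.Theory.
Local Open Scope ring_scope.

Section LinearEndomorphisms.
Variables (F : fieldType) (V : lmodType F).

Record endo := Endo { endo_fun :> V -> V; endo_is_linear : linear endo_fun }.

HB.instance Definition _ (f : endo) :=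
  GRing.isLinear.Build F V V *:%R f (endo_is_linear f).

Lemma endoP (f g : endo) : f =1 g -> f = g.
Proof.
case: f g => f fL [g gL] /= /funext fg; subst g.
by rewrite (Prop_irrelevance fL gL).
Qed.

HB.instance Definition _ := gen_eqMixin endo.
HB.instance Definition _ := gen_choiceMixin endo.

Fact endo0_linear : linear (fun _ : V => 0 : V).
Proof. by move=> a x y; rewrite scaler0 addr0. Qed.
Fact endo_add_linear (f g : endo) : linear (fun x => f x + g x).
Proof. by move=> a x y; rewrite !linearP scalerDr addrACA. Qed.
Fact endo_opp_linear (f : endo) : linear (fun x => - f x).
Proof. by move=> a x y; rewrite linearP opprD scalerN. Qed.
Fact endo_scale_linear (c : F) (f : endo) : linear (fun x => c *: f x).
Proof. by move=> a x y; rewrite linearP scalerDr !scalerA mulrC. Qed.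
Fact endo_id_linear : linear (fun x : V => x).
Proof. by []. Qed.
Fact endo_comp_linear (f g : endo) : linear (fun x => f (g x)).
Proof. by move=> a x y; rewrite !linearP. Qed.

Definition endo0 := Endo endo0_linear.
Definition endo_add f g := Endo (endo_add_linear f g).
Definition endo_opp f := Endo (endo_opp_linear f).
Definition endo_scale c f := Endo (endo_scale_linear c f).
Definition endo_id := Endo endo_id_linear.
Definition endo_comp f g := Endo (endo_comp_linear f g).

Fact endo_addA : associative endo_add.
Proof. by move=> f g h; apply: endoP => x /=; rewrite addrA. Qed.
Fact endo_addC : commutative endo_add.
Proof. by move=> f g; apply: endoP => x /=; rewrite addrC. Qed.
Fact endo_add0 : left_id endo0 endo_add.
Proof. by move=> f; apply: endoP => x /=; rewrite add0r. Qed.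
Fact endo_addN : left_inverse endo0 endo_opp endo_add.
Proof. by move=> f; apply: endoP => x /=; rewrite addNr. Qed.

HB.instance Definition _ :=
  GRing.isZmodule.Build endo endo_addA endo_addC endo_add0 endo_addN.

Fact endo_scaleA a b f : endo_scale a (endo_scale b f) = endo_scale (a * b) f.
Proof. by apply: endoP => x /=; rewrite scalerA. Qed.
Fact endo_scale1 : left_id 1 endo_scale.
Proof. by move=> f; apply: endoP => x /=; rewrite scale1r. Qed.
Fact endo_scaleDr : right_distributive endo_scale +%R.
Proof. by move=> a f g; apply: endoP => x /=; rewrite scalerDr. Qed.
Fact endo_scaleDl f : {morph endo_scale^~ f : a b / a + b}.
Proof. by move=> a b; apply: endoP => x /=; rewrite scalerDl. Qed.

HB.instance Definition _ := GRing.Zmodule_isLmodule.Build F endo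
  endo_scaleA endo_scale1 endo_scaleDr endo_scaleDl.

Fact endo_compA : associative endo_comp.
Proof. by move=> f g h; apply: endoP. Qed.
Fact endo_comp1 : left_id endo_id endo_comp.
Proof. by move=> f; apply: endoP. Qed.
Fact endo_compr1 : right_id endo_id endo_comp.
Proof. by move=> f; apply: endoP. Qed.
Fact endo_compDl : left_distributive endo_comp +%R.
Proof. by move=> f g h; apply: endoP. Qed.
Fact endo_compDr : right_distributive endo_comp +%R.
Proof. by move=> f g h; apply: endoP => x /=; rewrite linearD. Qed.

HB.instance Definition _ := GRing.Zmodule_isPzRing.Build endo
  endo_compA endo_comp1 endo_compr1 endo_compDl endo_compDr.

End LinearEndomorphisms.

(* The endomorphisms of [V] form a ring that is trivial when [V = 0]; adding a
   copy of [F] to [V] makes them a genuine (nonzero) [F]-algebra. *)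
Definition endo_algebra (F : fieldType) (V : lmodType F) := endo (V * F^o)%type.

Section EndoAlgebra.
Variables (F : fieldType) (V : lmodType F).

HB.instance Definition _ := GRing.PzRing.on (endo_algebra V).
HB.instance Definition _ := GRing.Lmodule.on (endo_algebra V).

Fact endo_algebra_nonzero : 1 != 0 :> endo_algebra V.
Proof.
apply/eqP => /(congr1 (fun f : endo_algebra V => f (0, (1 : F^o)))) [].
by move/eqP; rewrite oner_eq0.
Qed.

HB.instance Definition _ :=
  GRing.PzSemiRing_isNonZero.Build (endo_algebra V) endo_algebra_nonzero.

Fact endo_scaleAl (a : F) (f g : endo_algebra V) : a *: (f * g) = (a *: f) * g.
Proof. by apply: endoP. Qed.
Fact endo_scaleAr (a : F) (f g : endo_algebra V) : a *: (f * g) = f * (a *: g).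
Proof. by apply: endoP => x /=; rewrite linearZ. Qed.

HB.instance Definition _ :=
  GRing.Lmodule_isLalgebra.Build F (endo_algebra V) endo_scaleAl.
HB.instance Definition _ :=
  GRing.Lalgebra_isAlgebra.Build F (endo_algebra V) endo_scaleAr.

End EndoAlgebra.

Lemma scale_add_pair (F : fieldType) (U W : lmodType F) c (u u' : U) (w w' : W) :
  c *: (u, w) + (u', w') = (c *: u + u', c *: w + w').
Proof. by []. Qed.

Lemma add_pair (U W : zmodType) (u u' : U) (w w' : W) :
  (u, w) + (u', w') = (u + u', w + w').
Proof. by []. Qed.

Section DialgebraRepresentation.
Variables (F : fieldType) (D : lmodType F) (dl dr : D -> D -> D).
Hypothesis dia : assoc_dialgebra dl dr.

Lemma dlDl x y z : dl (x + y) z = dl x z + dl y z.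
Proof. by rewrite -[x]scale1r (dl_linl dia) !scale1r. Qed.

Lemma drDr x y z : dr x (y + z) = dr x y + dr x z.
Proof. by rewrite -[y]scale1r (dr_linr dia) !scale1r. Qed.

Fact mult_rep_linear (a : D) :
  linear (fun v : (D * D) * F^o => ((dl a v.1.1, dr v.1.2 a), 0 : F^o)).
Proof.
move=> c [[x y] s] [[x' y'] s'] /=.
by rewrite (dl_linr dia) (dr_linl dia) !scale_add_pair scaler0 addr0.
Qed.

Definition mult_rep (a : D) : endo_algebra (D * D)%type := Endo (mult_rep_linear a).

Fact mult_rep_is_linear : linear mult_rep.
Proof.
move=> c a b; apply: endoP => -[[x y] s] /=.
by rewrite (dl_linl dia) (dr_linr dia) !scale_add_pair scaler0 addr0.
Qed.

HB.instance Definition _ := GRing.isLinear.Build F D _ *:%R mult_rep mult_rep_is_linear.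

Lemma mult_rep_dr a b : mult_rep (dr a b) = mult_rep (dl a b).
Proof. by apply: endoP => -[[x y] s] /=; rewrite (dia1 dia) (dia2 dia). Qed.

Lemma mult_rep_jordan a b :
  mult_rep (dl a b + dr b a) = mult_rep a * mult_rep b + mult_rep b * mult_rep a.
Proof.
apply: endoP => -[[x y] s] /=.
rewrite dlDl drDr !add_pair addr0 (dia1 dia) !(dia3 dia) (dia2 dia) !(dia4 dia).
by rewrite [dr y (dr b a) + _]addrC.
Qed.

Lemma mult_rep_dlp a b : mult_rep (dlp dl dr a b) =
  (2%:R : F)^-1 *: (mult_rep a * mult_rep b + mult_rep b * mult_rep a).
Proof. by rewrite /dlp linearZ /= mult_rep_jordan. Qed.

Lemma mult_rep_dlp_drp a b : mult_rep (dlp dl dr a b - drp dl dr a b) = 0.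
Proof.
rewrite /dlp /drp linearB !linearZ !linearD /= !mult_rep_dr.
by rewrite -opprD scalerN subrr.
Qed.

Lemma mult_rep_commJ J x : commJ dl dr J x -> mult_rep x = 0.
Proof.
elim=> [a b _ _ | | c y z _ IHy _ IHz]; first exact: mult_rep_dlp_drp.
  exact: linear0.
by rewrite linearP /= IHy IHz scaler0 addr0.
Qed.

(* [a |-_+ b] is read off from the action of [a] on [(b, b)]. *)
Lemma dlp_mult_rep_eq0 a b : mult_rep a = 0 -> dlp dl dr a b = 0.
Proof.
move=> /(congr1 (fun f : endo_algebra _ => f ((b, b), 0 : F^o))) [ab ba].
by rewrite /dlp ab ba addr0 scaler0.
Qed.

End DialgebraRepresentation.

Lemma commJN (F : fieldType) (D : lmodType F) (dl dr : D -> D -> D) J x :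
  commJ dl dr J x -> commJ dl dr J (- x).
Proof.
by move=> Jx; rewrite -[- x]addr0 -scaleN1r; apply: commJ_lin Jx (commJ_0 dl dr J).
Qed.

Theorem mainTheorem18 (F : fieldType) (D : lmodType F) (dl dr : D -> D -> D)
    (J : D -> Prop) :
  [pchar F] =i pred0 ->
  assoc_dialgebra dl dr ->
  sub_dialgebra_plus dl dr J ->
  Jbar_has_unit dl dr J ->
  Jbar_special dl dr J.
Proof.
move=> _ dia _ [e _ unit_e].
exists (endo_algebra (D * D)%type), (mult_rep dia); split.
- by move=> c a b _ _; apply: linearP.
- move=> a Ja; split; last exact: mult_rep_commJ.
  move=> /(dlp_mult_rep_eq0 e) ae0.
  by have /commJN := (unit_e a Ja).2; rewrite ae0 sub0r opprK.
- by move=> a b _ _; apply: mult_rep_dlp.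
Qed.
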